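(* For every $N\in\mathbb{N}$, $\Delta_{\ell_\infty^N}^{(c)}(R)=R$ for all $R\in[0,\infty)$.
   Context: $\ell_\infty^N$ is $\mathbb{R}^N$ with the max norm. For a cover $\mathcal{U}$ of a metric space $X$: $\mathrm{diam}(\mathcal{U})=\sup_{U\in\mathcal{U}}\mathrm{diam}(U)$; $\mathcal{L}(\mathcal{U})=\sup\{d\in[0,\infty): \text{every } E\subseteq X \text{ with } \mathrm{diam}(E)<d \text{ is contained in some } U\in\mathcal{U}\}$; point-finite means each point lies in only finitely many members. $\Delta_X^{(c)}(R)=\inf\{\mathrm{diam}(\mathcal{U}): \mathcal{U} \text{ point-finite cover of } X,\ \mathcal{L}(\mathcal{U})\geq R\}$. *)

From mathcomp Require Import all_boot all_order all_algebra.
From mathcomp Require Import all_classical all_reals ereal.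
Set Implicit Arguments. Unset Strict Implicit. Unset Printing Implicit Defensive.
Import Order.TTheory GRing.Theory Num.Theory.
Local Open Scope classical_set_scope.
Local Open Scope ring_scope.

Section Defs.
Variable R : realType.

Definition linf_dist (N : nat) (x y : 'I_N -> R) : R :=
  \big[Num.max/0]_(i < N) `|x i - y i|.

Variable T : Type.
Variable d : T -> T -> R.

(* diameter of a set (convention diam(empty) = 0); value in [0, +oo] *)
Definition diam (E : set T) : \bar R :=
  ereal_sup ([set 0%E] `|` [set (d x y)%:E | x in E & y in E]).

Definition is_cover (U : set (set T)) : Prop := \bigcup_(A in U) A = setT.

Definition point_finite (U : set (set T)) : Prop :=
  forall x : T, finite_set [set A | U A /\ A x].

Definition cover_diam (U : set (set T)) : \bar R :=
  ereal_sup [set diam A | A in U].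

Definition lebesgue_number (U : set (set T)) : \bar R :=
  ereal_sup [set r%:E | r in [set r : R | 0 <= r /\
     forall E : set T, (diam E < r%:E)%E -> exists2 A, U A & E `<=` A]].

Definition Delta_c (r : R) : \bar R :=
  ereal_inf [set cover_diam U | U in [set U | is_cover U /\ point_finite U /\
                                      (r%:E <= lebesgue_number U)%E]].
End Defs.

From mathcomp Require Import all_boot all_order all_algebra.
From mathcomp Require Import all_classical all_reals ereal.
From mathcomp Require Import lra zify.
Set Implicit Arguments. Unset Strict Implicit. Unset Printing Implicit Defensive.
Import Order.TTheory GRing.Theory Num.Theory.
Local Open Scope classical_set_scope.
Local Open Scope ring_scope.

(* Upper bound: for every δ > 0 the half-open cubes of side r + δ with corners
   on the lattice δℤ^N form a point-finite cover of diameter r + δ, and a set of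
   diameter < r fits in the cube whose corner lies just below its coordinatewise
   infimum.  Lower bound: the points 0 and (s, ..., s) are at distance s, so for
   s < r they lie in a common member of any cover of Lebesgue number >= r. *)

Lemma finite_set_int_box (n m : nat) (a : 'I_n -> int) :
  finite_set [set k : 'I_n -> int | forall i, a i - m%:Z <= k i <= a i].
Proof.
apply: (@sub_finite_set _ _
  [set (fun i => a i - (j i : nat)%:Z) | j in [set: {ffun 'I_n -> 'I_m.+1}]]);
  last exact/finite_image/finite_finset.
move=> k kb; exists [ffun i => inord `|a i - k i|%N] => //.
apply: funext => i; have kbi := kb i; rewrite ffunE inordK; lia.
Qed.

Section Diameter.
Variables (R : realType) (T : Type) (d : T -> T -> R).

Lemma diam_ge0 (E : set T) : (0 <= diam d E)%E.
Proof. by apply: ereal_sup_ubound; left. Qed.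

Lemma dist_le_diam (E : set T) x y : E x -> E y -> ((d x y)%:E <= diam d E)%E.
Proof.
by move=> Ex Ey; apply: ereal_sup_ubound; right; exists x => //; exists y.
Qed.

Lemma diam_le_ub (E : set T) c : 0 <= c ->
  (forall x y, E x -> E y -> d x y <= c) -> (diam d E <= c%:E)%E.
Proof.
move=> c0 Ec; apply: ge_ereal_sup => _ [->|[x Ex [y Ey <-]]]; rewrite lee_fin //.
exact: Ec.
Qed.

Lemma le_diam (E F : set T) : E `<=` F -> (diam d E <= diam d F)%E.
Proof.
move=> EF; apply: ereal_sup_le => _ [->|[x Ex [y Ey <-]]]; first by left.
by right; exists x; [exact: EF | exists y => //; exact: EF].
Qed.

Lemma diam_le_cover_diam (U : set (set T)) A E :
  U A -> E `<=` A -> (diam d E <= cover_diam d U)%E.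
Proof.
move=> UA EA; apply: (@le_trans _ _ (diam d A)); first exact: le_diam.
by apply: ereal_sup_ubound; exists A.
Qed.

Lemma cover_diam_ge0 (U : set (set T)) (x : T) :
  is_cover U -> (0 <= cover_diam d U)%E.
Proof.
move=> covU; have : setT x by [].
rewrite -covU => -[A UA _].
apply: (@le_trans _ _ (diam d A)); first exact: diam_ge0.
exact: diam_le_cover_diam UA _.
Qed.

End Diameter.

Section LinfLowerBound.
Variables (R : realType) (N : nat).
Local Notation d := (@linf_dist R N).

Lemma normB_le_linf_dist (x y : 'I_N -> R) i : `|x i - y i| <= d x y.
Proof. exact: (le_bigmax _ (fun i => `|x i - y i|)). Qed.

Lemma linf_dist_le (x y : 'I_N -> R) c :
  0 <= c -> (forall i, `|x i - y i| <= c) -> d x y <= c.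
Proof. by move=> c0 xyc; apply: bigmax_le. Qed.

Lemma diam_cst_pair (s : R) : (0 < N)%N -> 0 <= s ->
  diam d [set (fun=> 0); (fun=> s)] = s%:E.
Proof.
move=> N0 s0; apply: le_anti; apply/andP; split.
  apply: diam_le_ub => // x y [->|->] [->|->]; apply: linf_dist_le => // i;
    by rewrite ?subrr ?normr0 ?sub0r ?subr0 ?normrN ?ger0_norm.
apply: (@le_trans _ _ (d (fun=> 0) (fun=> s))%:E).
  rewrite lee_fin; apply: le_trans (normB_le_linf_dist _ _ (Ordinal N0)).
  by rewrite sub0r normrN ger0_norm.
by apply: dist_le_diam; [left | right].
Qed.

Lemma lebesgue_number_le_cover_diam (U : set (set ('I_N -> R))) :
  (0 < N)%N -> is_cover U -> (lebesgue_number d U <= cover_diam d U)%E.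
Proof.
move=> N0 covU; apply: ge_ereal_sup => _ [r [r0 Ur] <-].
apply/lee_subgt0Pr => e e0; rewrite -EFinB.
have [se0|se0] := leP (r - e) 0.
  apply: (@le_trans _ _ 0%E); first by rewrite lee_fin.
  exact: cover_diam_ge0 (fun=> 0) covU.
have [|A UA pairA] := Ur [set (fun=> 0); (fun=> r - e)].
  by rewrite diam_cst_pair ?(ltW se0) // lte_fin; lra.
by rewrite -diam_cst_pair ?(ltW se0) //; exact: diam_le_cover_diam UA pairA.
Qed.

End LinfLowerBound.

Section GridCover.
Variables (R : realType) (N : nat).
Local Notation d := (@linf_dist R N).

Lemma floor_scaled_itv (δ : R) : 0 < δ -> forall a,
  (Num.floor (a / δ))%:~R * δ <= a < (Num.floor (a / δ))%:~R * δ + δ.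
Proof.
move=> δ0 a; have := floor_itv (a / δ).
by rewrite ler_pdivlMr // ltr_pdivrMr // intrD mulrDl mul1r.
Qed.

Definition grid_box (δ l : R) (k : 'I_N -> int) : set ('I_N -> R) :=
  [set x | forall i, (k i)%:~R * δ <= x i < (k i)%:~R * δ + l].

Definition grid_cover (δ l : R) : set (set ('I_N -> R)) := range (grid_box δ l).

Lemma grid_cover_is_cover (δ l : R) :
  0 < δ -> δ <= l -> is_cover (grid_cover δ l).
Proof.
move=> δ0 δl; apply/seteqP; split => // x _.
pose k i := Num.floor (x i / δ).
exists (grid_box δ l k); first by exists k.
move=> i; have /andP[lo hi] := floor_scaled_itv δ0 (x i).
by rewrite lo (lt_le_trans hi) // lerD2l.
Qed.

Lemma cover_diam_grid_cover (δ l : R) :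
  0 <= l -> (cover_diam d (grid_cover δ l) <= l%:E)%E.
Proof.
move=> l0; apply: ge_ereal_sup => _ [_ [k _ <-] <-].
apply: diam_le_ub => // x y xk yk; apply: linf_dist_le => // i.
have /andP[? ?] := xk i; have /andP[? ?] := yk i.
by rewrite ler_norml; apply/andP; split; lra.
Qed.

Lemma grid_box_index_bounds (δ l : R) k x : 0 < δ -> grid_box δ l k x ->
  forall i,
  Num.floor (x i / δ) - (Num.truncn (l / δ))%:Z <= k i <= Num.floor (x i / δ).
Proof.
move=> δ0 xk i; have /andP[lo hi] := xk i.
have kx : k i <= Num.floor (x i / δ) by rewrite floor_ge_int ler_pdivlMr.
have : ((Num.floor (x i / δ) - k i)%:~R : R) < (Num.truncn (l / δ)).+1%:Z%:~R.
  have xkl : x i / δ < (k i)%:~R + l / δ.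
    by rewrite ltr_pdivrMr // mulrDl divfK ?gt_eqF.
  have := floor_le (x i / δ); have := truncnS_gt (l / δ).
  by rewrite intrB /=; lra.
by rewrite ltr_int; lia.
Qed.

Lemma point_finite_grid_cover (δ l : R) : 0 < δ -> point_finite (grid_cover δ l).
Proof.
move=> δ0 x; apply: (sub_finite_set _ (finite_image (grid_box δ l)
  (finite_set_int_box (Num.truncn (l / δ)) (fun i => Num.floor (x i / δ))))).
by move=> _ [[k _ <-] xk]; exists k => //; exact: grid_box_index_bounds.
Qed.

Lemma sub_grid_box (δ r : R) (E : set ('I_N -> R)) : 0 < δ ->
  (diam d E < r%:E)%E -> exists k, E `<=` grid_box δ (r + δ) k.
Proof.
move=> δ0 Er; have [->|/set0P[e Ee]] := eqVneq E set0.
  by exists (fun=> 0).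
have coord_lt x y i : E x -> E y -> x i - r < y i.
  move=> Ex Ey; have : d x y < r.
    by rewrite -lte_fin (le_lt_trans _ Er) //; exact: dist_le_diam.
  by have := normB_le_linf_dist x y i; rewrite ler_norml => /andP[_ ?]; lra.
pose a i := inf [set x i | x in E].
exists (fun i => Num.floor (a i / δ)) => x Ex i.
have ax : a i <= x i.
  apply: ge_inf; last by exists x.
  by exists (e i - r) => _ [y Ey <-]; exact/ltW/coord_lt.
have xa : x i - r <= a i.
  apply: lb_le_inf; first by exists (x i), x.
  by move=> _ [y Ey <-]; exact/ltW/coord_lt.
by have /andP[lo hi] := floor_scaled_itv δ0 (a i); apply/andP; split; lra.
Qed.

Lemma lebesgue_number_grid_cover (δ r : R) : 0 < δ -> 0 <= r ->
  (r%:E <= lebesgue_number d (grid_cover δ (r + δ)))%E.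
Proof.
move=> δ0 r0; apply: ereal_sup_ubound; exists r => //; split => //.
move=> E /(sub_grid_box δ0)[k Ek].
by exists (grid_box δ (r + δ) k) => //; exists k.
Qed.

End GridCover.

Theorem proposition4p5 (R : realType) (N : nat) : (0 < N)%N ->
  forall r : R, 0 <= r ->
    Delta_c (@linf_dist R N) r = r%:E.
Proof.
move=> N0 r r0; apply: le_anti; apply/andP; split.
  apply/lee_addgt0Pr => δ δ0; apply: ge_ereal_inf.
  exists (cover_diam (@linf_dist R N) (grid_cover δ (r + δ))).
    exists (grid_cover δ (r + δ)) => //; split.
      by apply: grid_cover_is_cover; lra.
    by split; [exact: point_finite_grid_cover | exact: lebesgue_number_grid_cover].
  by rewrite -EFinD; apply: cover_diam_grid_cover; lra.
apply: le_ereal_inf_tmp => _ [U [covU [_ rU]] <-].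
exact: le_trans rU (lebesgue_number_le_cover_diam N0 covU).
Qed.
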